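(* Let $(E,\rho)$ be a weighted space and $(\psi_t)_{t\ge0}$ a family of maps $E\to E$, and set $P(t)f:=f\circ\psi_t$. Then $(P(t))_{t\ge0}$ is a generalized Feller semigroup on $\mathscr{B}^\rho(E)$ if and only if: (i) $\psi_0=\mathrm{Id}$; (ii) $\psi_{t_1}\circ\psi_{t_2}=\psi_{t_1+t_2}$ for all $t_1,t_2\ge0$; (iii) $\lim_{t\downarrow0}\psi_t(x)=x$ for all $x\in E$; (iv) for all $t\ge0$ and $R>0$ the restriction $\psi_t|_{K_R}:K_R\to E$ is continuous; (v) $C_t:=\sup_{x\in E}\rho(\psi_t(x))/\rho(x)<\infty$ for all $t\ge0$; (vi) there exist $\delta>0$ and $C>0$ with $C_t<C$ for all $0\le t<\delta$. Moreover, for such a generalized Feller semigroup, for all $t\ge0$ and $x\in E$, $$\sup\{|f(\psi_t(x))|: f\in C_b(E),\ |f|\le\rho\}=\rho(\psi_t(x)).$$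
   Context: A weighted space is a pair $(E,\rho)$ where $E$ is a completely regular Hausdorff topological space and $\rho:E\to(0,\infty)$ is an admissible weight function, meaning that for every $R\ge 0$ the sublevel set $K_R:=\{x\in E:\rho(x)\le R\}$ is compact. For $f:E\to\mathbb{R}$ put $\|f\|_\rho:=\sup_{x\in E}|f(x)|/\rho(x)$; $\mathscr{B}^\rho(E)$ denotes the closure of $C_b(E)$ with respect to $\|\cdot\|_\rho$ inside $\{f:E\to\mathbb{R}:\|f\|_\rho<\infty\}$. A generalized Feller semigroup on $\mathscr{B}^\rho(E)$ is a family $(P(t))_{t\ge0}$ of bounded linear operators on $\mathscr{B}^\rho(E)$ such that (P1) $P(0)=\mathrm{Id}$; (P2) $P(t+s)=P(s)P(t)$ for all $s,t\ge0$; (P3) $\lim_{t\downarrow0}P(t)f(x)=f(x)$ for all $f\in\mathscr{B}^\rho(E)$, $x\in E$; (P4) there exist $\varepsilon>0$, $C<\infty$ with $\|P(t)\|_{L(\mathscr{B}^\rho(E))}\le C$ for all $t\in[0,\varepsilon]$; (P5) each $P(t)$ is a positive operator. *)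

From HB Require Import structures.
From mathcomp Require Import all_boot all_order all_algebra.
From mathcomp Require Import all_classical all_reals all_analysis.
Set Implicit Arguments. Unset Strict Implicit. Unset Printing Implicit Defensive.
Import Order.TTheory GRing.Theory Num.Theory.
Import numFieldNormedType.Exports.
Local Open Scope classical_set_scope.
Local Open Scope ring_scope.

Section Weighted.
Context {R : realType} {E : topologicalType}.

Definition completely_regular_sp :=
  forall (a : E) (B : set E), closed B -> ~ B a ->
  exists f : E -> R, [/\ continuous f, f a = 0, (forall x, B x -> f x = 1)
                      & (forall x, 0 <= f x <= 1)].

Definition sublevel (rho : E -> R) (r : R) : set E := [set x | rho x <= r].

Definition admissible_weight (rho : E -> R) :=
  (forall x, 0 < rho x) /\ (forall r, 0 <= r -> compact (sublevel rho r)).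

Definition weighted_space (rho : E -> R) :=
  [/\ completely_regular_sp, hausdorff_space E & admissible_weight rho].

Definition rho_norm (rho : E -> R) (f : E -> R) : \bar R :=
  ereal_sup [set (`|f x| / rho x)%:E | x in [set: E]].

Definition Cb (f : E -> R) :=
  continuous f /\ exists M : R, forall x, `|f x| <= M.

(* B^rho(E): closure of C_b(E) w.r.t. ||.||_rho inside {f : ||f||_rho < oo} *)
Definition Brho (rho : E -> R) (f : E -> R) :=
  (rho_norm rho f < +oo)%E /\
  forall eps : R, 0 < eps ->
    exists g, Cb g /\ (rho_norm rho (fun x => (f x - g x)%R) <= eps%:E)%E.

(* generalized Feller semigroup on B^rho(E); P t is only relevant for t >= 0 *)
Definition gen_Feller_semigroup (rho : E -> R)
  (P : R -> (E -> R) -> (E -> R)) :=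
  [/\
      (forall t, 0 <= t -> forall f, Brho rho f -> Brho rho (P t f)),
      (forall t, 0 <= t -> forall (a b : R) f g, Brho rho f -> Brho rho g ->
          P t (fun x => (a * f x + b * g x)%R) = (fun x => (a * P t f x + b * P t g x)%R)),
      (forall t, 0 <= t -> exists M : R,
          forall f, Brho rho f -> (rho_norm rho (P t f) <= M%:E * rho_norm rho f)%E),
      (forall f, Brho rho f -> P 0 f = f) &
     [/\ (forall s t, 0 <= s -> 0 <= t -> forall f, Brho rho f ->
          P (t + s) f = P s (P t f)),
      (forall f, Brho rho f -> forall x,
          P t f x @[t --> 0^'+] --> f x),
      (exists (eps : R) (C : R), 0 < eps /\
          forall t, 0 <= t <= eps -> forall f, Brho rho f ->
            (rho_norm rho (P t f) <= C%:E * rho_norm rho f)%E) &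
      (forall t, 0 <= t -> forall f, Brho rho f ->
          (forall x, 0 <= f x) -> forall x, 0 <= P t f x)]].

Definition Ct (rho : E -> R) (psi : R -> E -> E) (t : R) : \bar R :=
  ereal_sup [set (rho (psi t x) / rho x)%:E | x in [set: E]].

End Weighted.

(* Everything is tested against C_b(E), which lies in B^rho(E) because rho is
   bounded below (its sublevel sets are compact).  By complete regularity C_b
   functions separate points and detect convergence, so the semigroup laws and
   the continuity of t |-> P(t) at 0 and of P(t)f on the compacts K_R transfer
   to psi.  Bumps f in C_b with |f| <= rho and f(y) arbitrarily close to rho(y)
   give the sup formula, which turns the operator bounds into the bounds
   rho(psi_t x) <= C_t rho(x).  Conversely P(t) is bounded by C_t and preserves
   B^rho: for g in C_b, g o psi_t is bounded and continuous on every K_R, and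
   such a function lies in B^rho because on the compact K_R it is a uniform
   limit of C_b functions, while outside K_R the error is absorbed by rho. *)

From HB Require Import structures.
From mathcomp Require Import all_boot all_order all_algebra.
From mathcomp Require Import all_classical all_reals all_analysis.
From mathcomp Require Import lra.
Import Order.TTheory GRing.Theory Num.Theory.
Import numFieldNormedType.Exports.
Local Open Scope classical_set_scope.
Local Open Scope ring_scope.
Set Implicit Arguments. Unset Strict Implicit. Unset Printing Implicit Defensive.

Section CompactCover.
Context {E : topologicalType}.

Lemma compact_directed_cover (I : Type) (K : set E) (L : set I)
    (P : I -> E -> Prop) :
  compact K -> L !=set0 ->
  (forall i j, L i -> L j ->
     exists2 k, L k & forall y, P i y \/ P j y -> P k y) ->
  (forall x, K x -> exists2 i, L i & \forall y \near x, K y -> P i y) ->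
  exists2 i, L i & forall y, K y -> P i y.
Proof.
move=> cK [i0 Li0] directed local.
pose F := filter_from L (fun i => [set k | L k /\ forall y, P i y -> P k y]).
have FF : Filter F.
  apply: filter_from_filter; first by exists i0.
  move=> i j Li Lj; have [k Lk Pk] := directed _ _ Li Lj.
  exists k => // l [Ll Pl]; split; split=> // y Py; apply: Pl; apply: Pk; tauto.
have /(compact_near_coveringP K).1 /(_ I F (fun i y => K y -> P i y) FF) := cK.
case.
- move=> x Kx; have [i Li Pi] := local x Kx.
  exists ([set y | K y -> P i y], [set k | L k /\ forall y, P i y -> P k y]) => //.
    by split=> //; exists i.
  by move=> [y k] /= [Piy [_ Pk]] Ky; apply/Pk/Piy.
- by move=> i Li sub; exists i => // y Ky; apply: (sub i) => //; split.
Qed.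

End CompactCover.

Section WeightedSpace.
Context {R : realType} {E : topologicalType} (rho : E -> R).
Hypothesis rho_gt0 : forall x, 0 < rho x.

Lemma rho_norm_ub u x : ((`|u x| / rho x)%:E <= rho_norm rho u)%E.
Proof. by apply: ereal_sup_ubound; exists x. Qed.

Lemma rho_norm_leP u a :
  (rho_norm rho u <= a%:E)%E <-> forall x, `|u x| <= a * rho x.
Proof.
split=> [le_ua x|le_ua].
  by rewrite -ler_pdivrMr// -lee_fin (le_trans (rho_norm_ub u x)).
by apply: ge_ereal_sup => _ [x _ <-]; rewrite lee_fin ler_pdivrMr.
Qed.

Lemma rho_norm_ltyP u :
  (rho_norm rho u < +oo)%E <-> exists2 a, 0 < a & forall x, `|u x| <= a * rho x.
Proof.
split=> [|[a _ /rho_norm_leP le_ua]]; last exact: le_lt_trans le_ua (ltry _).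
case E_u: (rho_norm rho u) => [a| |] // _; last first.
  by exists 1 => // x; have := rho_norm_ub u x; rewrite E_u leeNy_eq.
exists (Num.max a 1); first by rewrite lt_max ltr01 orbT.
by apply/rho_norm_leP; rewrite E_u lee_fin le_max lexx.
Qed.

Lemma Ct_rho_norm (psi : R -> E -> E) t :
  Ct rho psi t = rho_norm rho (rho \o psi t).
Proof.
by congr ereal_sup; apply: eq_imagel => x _ /=; rewrite gtr0_norm.
Qed.
Hypothesis crE : @completely_regular_sp R E.
Hypothesis hausE : hausdorff_space E.
Hypothesis sublevel_compact : forall r, 0 <= r -> compact (sublevel rho r).

Lemma sublevel_closed r : 0 <= r -> closed (sublevel rho r).
Proof. by move=> r0; apply: compact_closed => //; exact: sublevel_compact. Qed.

Lemma rho_bounded_below : exists2 m, 0 < m & forall x, m <= rho x.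
Proof.
have [[x0 _]|E0] := pselect (exists x : E, True); last first.
  by exists 1 => [|x]; [exact: ltr01|exfalso]; apply: E0; exists x.
have [e e_gt0 K_e] : exists2 e : R, 0 < e &
    forall y, sublevel rho (rho x0) y -> e < rho y.
  apply: compact_directed_cover; first exact/sublevel_compact/ltW.
  - by exists 1; rewrite /= ltr01.
  - move=> e1 e2 e1_gt0 e2_gt0; exists (Num.min e1 e2).
      by rewrite /= lt_min e1_gt0.
    by move=> y [] lt; rewrite gt_min lt ?orbT.
  - move=> x _; exists (rho x / 2); first by rewrite divr_gt0.
    have x_out : (~` sublevel rho (rho x / 2)) x.
      by apply/negP; rewrite -ltNge ltr_pdivrMr// ltr_pMr// ltr1n.
    have : open (~` sublevel rho (rho x / 2)).
      by apply/closed_openC/sublevel_closed; rewrite divr_ge0 ?ltW.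
    rewrite openE => /(_ x x_out); apply: filterS => y.
    by rewrite /sublevel /= => /negP; rewrite -ltNge.
exists (Num.min e (rho x0)); first by rewrite lt_min e_gt0 rho_gt0.
move=> x; rewrite ge_min; have [/K_e/ltW ->//|] := pselect (sublevel rho (rho x0) x).
by rewrite /sublevel /= => /negP; rewrite -ltNge => /ltW ->; rewrite orbT.
Qed.

Lemma separating_fun x y : x <> y ->
  exists g : E -> R, [/\ continuous g, g x = 0, g y = 1 & forall z, 0 <= g z <= 1].
Proof.
move=> xy; have cl_y : closed [set y].
  exact/accessible_closed_set1/hausdorff_accessible.
have [g [cg gx gy g01]] := crE cl_y xy.
by exists g; split=> //; exact: gy.
Qed.

Lemma Cb_unit_range (g : E -> R) : continuous g -> (forall z, 0 <= g z <= 1) -> Cb g.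
Proof.
by move=> cg g01; split=> //; exists 1 => z; have /andP[g0 g1] := g01 z; rewrite ger0_norm.
Qed.

Lemma Cb_separates x y : (forall f : E -> R, Cb f -> f x = f y) -> x = y.
Proof.
move=> Cb_eq; apply: contrapT => xy; have [g [cg gx gy g01]] := separating_fun xy.
by have := Cb_eq g (Cb_unit_range cg g01); rewrite gx gy => /eqP; rewrite eq_sym oner_eq0.
Qed.

Lemma cvg_of_Cb (T : Type) (F : set_system T) (u : T -> E) p : Filter F ->
  (forall f : E -> R, Cb f -> f \o u @ F --> f p) -> u @ F --> p.
Proof.
move=> FF Cb_cvg U p_U.
have clB : closed (~` U°) by exact/open_closedC/open_interior.
have [g [cg gp gB g01]] := crE clB (fun B_p => B_p p_U).
have := Cb_cvg g (Cb_unit_range cg g01); rewrite gp => /cvgrPdist_lt/(_ 1 ltr01).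
apply: filterS => t; rewrite sub0r normrN /= => g_lt1.
apply: interior_subset; apply: contrapT => /gB g_eq1.
by move: g_lt1; rewrite g_eq1 normr1 ltxx.
Qed.

Lemma Cb_bump y c : 0 < c < rho y ->
  exists f, [/\ Cb f, forall x, `|f x| <= rho x & f y = c].
Proof.
move=> /andP[c_gt0 c_lt].
have y_out : ~ sublevel rho c y by apply/negP; rewrite -ltNge.
have [g [cg gy gK g01]] := crE (sublevel_closed (ltW c_gt0)) y_out.
exists (fun x => c * (1 - g x)); split.
- split.
    move=> x; apply: (@continuousM _ _ (cst c) (fun x => 1 - g x)).
      exact: cst_continuous.
    by apply: (@continuousB R R^o E (cst 1) g); [exact: cst_continuous|exact: cg].
  exists c => x; have /andP[g0 g1] := g01 x.
  by rewrite normrM gtr0_norm// ger0_norm; [nra|lra].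
- move=> x; have /andP[g0 g1] := g01 x; rewrite ger0_norm; last by nra.
  have [/gK ->|] := pselect (sublevel rho c x); first by rewrite subrr mulr0 ltW.
  by rewrite /sublevel /= => /negP; rewrite -ltNge; nra.
- by rewrite gy subr0 mulr1.
Qed.

Lemma ereal_sup_Cb_le_rho y :
  ereal_sup [set (`|f y|)%:E | f in [set f : E -> R | Cb f /\
                  (forall z, `|f z| <= rho z)]] = (rho y)%:E.
Proof.
apply/eqP; rewrite eq_le; apply/andP; split.
  by apply: ge_ereal_sup => _ [f [_ f_le] <-]; rewrite lee_fin.
have <- : ereal_sup [set c%:E | c in `]0, rho y[] = (rho y)%:E.
  rewrite ereal_sup_EFin; first by rewrite sup_itv// bnd_simp.
  - by exists (rho y) => c /=; rewrite in_itv /= => /andP[_ /ltW].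
  - by exists (rho y / 2); rewrite /= in_itv /=; have := rho_gt0 y; lra.
apply: ereal_sup_le => _ [c /= c_in <-]; move: c_in; rewrite in_itv /= => c_in.
have [f [Cbf f_le fy]] := Cb_bump c_in.
by exists f => //; rewrite fy gtr0_norm//; case/andP: c_in.
Qed.

Lemma interpolating_fun (M : R) x y a b :
  `|a| <= M -> `|b| <= M -> (x = y -> a = b) ->
  exists g : E -> R, [/\ continuous g, forall z, `|g z| <= M, g x = a & g y = b].
Proof.
move=> aM bM xy_ab; have [xy|xy] := pselect (x = y).
  by exists (cst a); split=> //; [exact: cst_continuous|rewrite xy_ab].
have [g [cg gx gy g01]] := separating_fun xy.
exists (fun z => a + (b - a) * g z); split.
- move=> z; apply: (@continuousD _ _ _ (cst a) (fun z => (b - a) * g z)).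
    exact: cst_continuous.
  by apply: (@continuousM _ _ (cst (b - a)) g); [exact: cst_continuous|exact: cg].
- move=> z; have /andP[g0 g1] := g01 z.
  move: aM bM; rewrite !ler_norml => /andP[? ?] /andP[? ?]; apply/andP; split; nra.
- by rewrite gx mulr0 addr0.
- by rewrite gy mulr1 addrC subrK.
Qed.

Lemma within_continuous_close (K : set E) (h f : E -> R) x e : 0 < e ->
  {within K, continuous h} -> continuous f -> K x -> f x = h x ->
  \forall z \near x, K z -> `|h z - f z| < e.
Proof.
move=> e_gt0 ch cf Kx fx; have e2_gt0 : 0 < e / 2 by rewrite divr_gt0.
have /cvgrPdist_lt/(_ _ e2_gt0) := (subspace_continuousP K h).1 ch x Kx.
have /cvgrPdist_lt/(_ _ e2_gt0) := cf x.
apply: filter_app2; apply: nearW => z /=; rewrite fx !ltr_norml.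
by move=> /andP[? ?] + Kz => /(_ Kz) /andP[? ?]; apply/andP; split; lra.
Qed.

(* The lattice (Kakutani-Krein) form of Stone-Weierstrass: E is only completely
   regular, so no extension theorem of Tietze type is available. *)
Lemma compact_uniform_approx (K : set E) (h : E -> R) (M e : R) :
  compact K -> 0 < e -> 0 <= M -> {within K, continuous h} ->
  (forall x, K x -> `|h x| <= M) ->
  exists g : E -> R, [/\ continuous g, forall z, `|g z| <= M &
                         forall x, K x -> `|h x - g x| < e].
Proof.
move=> cK e_gt0 M_ge0 ch hM.
have [[x0 Kx0]|K0] := pselect (K !=set0); last first.
  exists (cst 0); split=> [|z|x Kx]; [exact: cst_continuous|by rewrite normr0|].
  by exfalso; apply: K0; exists x.
pose L := [set g : E -> R | continuous g /\ forall z, `|g z| <= M].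
have L_min f g : L f -> L g -> L (f \min g).
  move=> [cf fM] [cg gM]; split=> [z|z]; first exact: (continuous_min (cf z) (cg z)).
  by rewrite /= minEle; case: ifP.
have L_max f g : L f -> L g -> L (f \max g).
  move=> [cf fM] [cg gM]; split=> [z|z]; first exact: (continuous_max (cf z) (cg z)).
  by rewrite /= maxEle; case: ifP.
have below x : K x -> exists2 g, L g /\ g x = h x &
    forall y, K y -> g y < h y + e.
  move=> Kx; apply: compact_directed_cover cK _ _ _.
  - have [g [cg gM gx _]] :=
      interpolating_fun (x := x) (y := x) (hM x Kx) (hM x Kx) (fun=> erefl).
    by exists g.
  - move=> f g [Lf fx] [Lg gx]; exists (f \min g).
      by split; [exact: L_min|rewrite /= gx fx minxx].
    by move=> y [] lt; rewrite gt_min lt ?orbT.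
  - move=> y Ky; have [g [cg gM gx gy]] :=
      interpolating_fun (x := x) (y := y) (hM x Kx) (hM y Ky) (@congr1 _ _ h x y).
    exists g => //; apply: filterS (within_continuous_close e_gt0 ch cg Ky gy) => z lt Kz.
    by have := lt Kz; rewrite ltr_norml; lra.
have [g [Lg g_below] g_above] : exists2 g,
    L g /\ (forall y, K y -> g y < h y + e) & forall y, K y -> h y - e < g y.
  apply: compact_directed_cover cK _ _ _.
  - by have [g [Lg _] g_below] := below x0 Kx0; exists g.
  - move=> f g [Lf f_below] [Lg g_below]; exists (f \max g).
      by split=> [|y Ky]; [exact: L_max|rewrite gt_max f_below ?g_below].
    by move=> y [] lt; rewrite lt_max lt ?orbT.
  - move=> x Kx; have [g [[cg gM] gx] g_below] := below x Kx.
    exists g => //; apply: filterS (within_continuous_close e_gt0 ch cg Kx gx) => z lt Kz.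
    by have := lt Kz; rewrite ltr_norml; lra.
exists g; split; [exact: Lg.1|exact: Lg.2|move=> x Kx].
by rewrite ltr_norml; have := g_below x Kx; have := g_above x Kx; lra.
Qed.

Lemma rho_norm_bounded_lty (h : E -> R) B :
  (forall x, `|h x| <= B) -> (rho_norm rho h < +oo)%E.
Proof.
move=> hB; have [m m_gt0 m_le] := rho_bounded_below.
pose a := (`|B| + 1) / m; have a_gt0 : 0 < a by rewrite divr_gt0.
have a_m : a * m = `|B| + 1 by rewrite divfK ?gt_eqF.
apply/rho_norm_ltyP; exists a => // x.
have := ler_wpM2l (ltW a_gt0) (m_le x); have := hB x; have := ler_norm B; lra.
Qed.

Lemma Brho_bounded (h : E -> R) B : (forall x, `|h x| <= B) ->
  (forall r, 0 < r -> {within sublevel rho r, continuous h}) -> Brho rho h.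
Proof.
move=> hB ch; split; first exact: rho_norm_bounded_lty hB.
move=> e e_gt0; have [m m_gt0 m_le] := rho_bounded_below.
(* Outside [K_r], [|h - g| <= 2 |B| < e r < e rho]. *)
pose r := 2 * `|B| / e + 1.
have r_gt0 : 0 < r.
  have : 0 <= 2 * `|B| / e by rewrite divr_ge0 ?mulr_ge0 // ltW.
  by rewrite /r; lra.
have [g [cg gB hg]] := compact_uniform_approx (sublevel_compact (ltW r_gt0))
  (mulr_gt0 e_gt0 m_gt0) (normr_ge0 B) (ch r r_gt0) (fun x _ => le_trans (hB x) (ler_norm B)).
exists g; split; first by split=> //; exists `|B|.
apply/rho_norm_leP => x; have [Kx|] := pselect (sublevel rho r x).
  by rewrite ltW// (lt_le_trans (hg x Kx))// ler_pM2l.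
rewrite /sublevel /= => /negP; rewrite -ltNge => r_lt.
have er : e * r = 2 * `|B| + e by rewrite mulrDr mulr1 mulrC divfK ?gt_eqF.
have := ler_wpM2l (ltW e_gt0) (ltW r_lt); have := ler_normB (h x) (g x).
by have := hB x; have := ler_norm B; have := gB x; lra.
Qed.

Lemma Brho_Cb f : Cb f -> Brho rho f.
Proof.
move=> [cf [M fM]]; apply: (Brho_bounded fM) => r _.
exact: continuous_subspaceT.
Qed.

Lemma Brho_continuous_sublevel f r : Brho rho f -> {within sublevel rho r, continuous f}.
Proof.
move=> [_ f_approx]; apply/subspace_continuousP => x Kx.
have r_gt0 : 0 < r by rewrite (lt_le_trans (rho_gt0 x)).
apply/cvgrPdist_lt => e e_gt0.
have e3_gt0 : 0 < e / 3 by rewrite divr_gt0.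
have [g [[cg _] /rho_norm_leP fg]] := f_approx _ (divr_gt0 e3_gt0 r_gt0).
have fg_K y : sublevel rho r y -> `|f y - g y| <= e / 3.
  have r_e : e / 3 / r * r = e / 3 by rewrite divfK ?gt_eqF.
  move=> Ky; have := ler_wpM2l (ltW (divr_gt0 e3_gt0 r_gt0)) Ky.
  by rewrite r_e; exact: le_trans (fg y).
have /cvgrPdist_lt/(_ _ e3_gt0) := cg x; apply: filterS => y gxy Ky.
move: (fg_K x Kx) (fg_K y Ky) gxy; rewrite !ler_norml !ltr_norml.
by move=> /andP[? ?] /andP[? ?] /andP[? ?]; rewrite /from_subspace; apply/andP; split; lra.
Qed.

Lemma rho_norm_comp (f : E -> R) (psi : E -> E) c : 0 < c ->
  (forall x, rho (psi x) <= c * rho x) ->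
  (rho_norm rho (f \o psi) <= c%:E * rho_norm rho f)%E.
Proof.
move=> c_gt0 psi_le; case E_f: (rho_norm rho f) => [a| |].
- rewrite -EFinM mulrC; apply/rho_norm_leP => x /=.
  have /rho_norm_leP f_le : (rho_norm rho f <= a%:E)%E by rewrite E_f.
  have a_ge0 : 0 <= a by rewrite -(pmulr_lge0 _ (rho_gt0 (psi x))) (le_trans _ (f_le _)).
  by rewrite -mulrA (le_trans (f_le _))// ler_wpM2l.
- by rewrite gt0_muley ?lte_fin// leey.
- apply: ge_ereal_sup => _ [x _ <-]; exfalso.
  by have := rho_norm_ub f x; rewrite E_f leeNy_eq.
Qed.

Lemma Ct_le_of_norm_bound (psi : R -> E -> E) t M :
  (forall f, Cb f -> (rho_norm rho (f \o psi t) <= M%:E * rho_norm rho f)%E) ->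
  (Ct rho psi t <= (Num.max M 0)%:E)%E.
Proof.
move=> psi_bound; rewrite Ct_rho_norm; apply/rho_norm_leP => x /=.
rewrite gtr0_norm// -lee_fin -ereal_sup_Cb_le_rho.
apply: ge_ereal_sup => _ [f [Cbf f_le] <-]; rewrite lee_fin.
have f_le1 : (rho_norm rho f <= 1%:E)%E by apply/rho_norm_leP => y; rewrite mul1r.
have f_ge0 : (0 <= rho_norm rho f)%E.
  by apply: le_trans (rho_norm_ub f x); rewrite lee_fin divr_ge0// ltW.
suff /rho_norm_leP/(_ x) : (rho_norm rho (f \o psi t) <= (Num.max M 0)%:E)%E by [].
apply: le_trans (psi_bound f Cbf) _; move: f_le1 f_ge0.
case: (rho_norm rho f) => [n| |] //; rewrite -EFinM !lee_fin => n_le1 n_ge0.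
have : M <= Num.max M 0 by rewrite le_max lexx.
have : 0 <= Num.max M 0 by rewrite le_max lexx orbT.
by case: (leP 0 M); nra.
Qed.

Lemma Brho_comp (f : E -> R) (psi : E -> E) c : 0 < c ->
  (forall x, rho (psi x) <= c * rho x) ->
  (forall r, 0 < r -> {within sublevel rho r, continuous psi}) ->
  Brho rho f -> Brho rho (f \o psi).
Proof.
move=> c_gt0 psi_le psi_cont [/rho_norm_ltyP[a a_gt0 f_le] f_approx]; split.
  apply/rho_norm_ltyP; exists (a * c) => [|x]; first exact: mulr_gt0 a_gt0 c_gt0.
  by rewrite /= -mulrA (le_trans (f_le _))// ler_wpM2l ?(ltW a_gt0).
move=> e e_gt0; have e2_gt0 : 0 < e / 2 by rewrite divr_gt0.
have [g [[cg [Mg gMg]] /rho_norm_leP fg]] := f_approx _ (divr_gt0 e2_gt0 c_gt0).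
have [|k [Cbk /rho_norm_leP gk]] := (Brho_bounded (fun x => gMg (psi x)) _).2 _ e2_gt0.
  move=> r r_gt0; apply/subspace_continuousP => x Kx.
  exact: (cvg_comp _ _ ((subspace_continuousP _ _).1 (psi_cont r r_gt0) x Kx) (cg _)).
exists k; split=> //; apply/rho_norm_leP => x /=.
have c_e : e / 2 / c * (c * rho x) = e / 2 * rho x by rewrite mulrA divfK ?gt_eqF.
have := ler_wpM2l (ltW (divr_gt0 e2_gt0 c_gt0)) (psi_le x); rewrite c_e.
have := fg (psi x); have := gk x; have := ler_normD (f (psi x) - g (psi x)) (g (psi x) - k x).
by rewrite addrA subrK; lra.
Qed.

Lemma Brho_cvg_comp (T : Type) (F : set_system T) (u : T -> E) f x r :
  Filter F -> Brho rho f -> rho x <= r -> (\forall t \near F, rho (u t) <= r) ->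
  u @ F --> x -> f \o u @ F --> f x.
Proof.
move=> FF fB Kx u_K u_x.
have f_x := (subspace_continuousP _ _).1 (Brho_continuous_sublevel (r := r) fB) x Kx.
suff u_Kx : u @ F --> within (sublevel rho r) (nbhs x) by exact: cvg_comp u_Kx f_x.
move=> V /u_x u_V.
have u_V' : \forall t \near F, sublevel rho r (u t) -> V (u t) := u_V.
by apply: filterS (filterI u_V' u_K) => t [KV Kt]; exact: KV Kt.
Qed.

Definition feller_flow (psi : R -> E -> E) :=
  [/\ (forall x, psi 0 x = x),
      (forall t1 t2, 0 <= t1 -> 0 <= t2 -> psi t1 \o psi t2 = psi (t1 + t2)),
      (forall x, psi t x @[t --> 0^'+] --> x),
      (forall t r, 0 <= t -> 0 < r -> {within sublevel rho r, continuous psi t}) &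
      ((forall t, 0 <= t -> (Ct rho psi t < +oo)%E) /\
      (exists delta C : R, [/\ 0 < delta, 0 < C &
         forall t, 0 <= t < delta -> (Ct rho psi t < C%:E)%E]))].

Lemma composition_semigroup_flow psi :
  gen_Feller_semigroup rho (fun t f => f \o psi t) -> feller_flow psi.
Proof.
move=> [Pmap _ Pbd P0 [PD Pcvg Pbd0 _]]; split.
- move=> x; apply: Cb_separates => f Cbf.
  by have /(congr1 (fun h => h x)) := P0 f (Brho_Cb Cbf).
- move=> t1 t2 t1_ge0 t2_ge0; apply/funext => x; apply: Cb_separates => f Cbf.
  by have /(congr1 (fun h => h x)) := PD t2 t1 t2_ge0 t1_ge0 f (Brho_Cb Cbf).
- by move=> x; apply: cvg_of_Cb => f Cbf; exact: Pcvg f (Brho_Cb Cbf) x.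
- move=> t r t_ge0 _; apply/subspace_continuousP => x Kx; apply: cvg_of_Cb => f Cbf.
  have fB := Pmap t t_ge0 f (Brho_Cb Cbf).
  exact: (subspace_continuousP _ _).1 (Brho_continuous_sublevel (r := r) fB) x Kx.
split=> [t t_ge0|].
  have [M PM] := Pbd t t_ge0.
  by apply: le_lt_trans (Ct_le_of_norm_bound (fun f Cbf => PM f (Brho_Cb Cbf))) (ltry _).
have [eps [C [eps_gt0 PC]]] := Pbd0; exists eps, (Num.max C 0 + 1); split=> //.
  by rewrite ltr_pwDr// le_max lexx orbT.
move=> t /andP[t_ge0 t_lt]; have t_le : 0 <= t <= eps by rewrite t_ge0 ltW.
apply: le_lt_trans (Ct_le_of_norm_bound (fun f Cbf => PC t t_le f (Brho_Cb Cbf))) _.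
by rewrite lte_fin ltrDl.
Qed.

Lemma flow_composition_semigroup psi :
  feller_flow psi -> gen_Feller_semigroup rho (fun t f => f \o psi t).
Proof.
move=> [psi0 psiD psi_cvg psi_cont [Ct_fin [delta [C [delta_gt0 C_gt0 Ct_lt]]]]].
have psi_le t : 0 <= t -> exists2 c, 0 < c & forall x, rho (psi t x) <= c * rho x.
  move=> t_ge0; move: (Ct_fin t t_ge0); rewrite Ct_rho_norm => /rho_norm_ltyP[c c_gt0 c_le].
  by exists c => // x; have := c_le x; rewrite /= gtr0_norm.
have psi_le_C t : 0 <= t < delta -> forall x, rho (psi t x) <= C * rho x.
  move=> t_in x; have /ltW := Ct_lt t t_in; rewrite Ct_rho_norm => /rho_norm_leP/(_ x).
  by rewrite /= gtr0_norm.
split.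
- move=> t t_ge0 f fB; have [c c_gt0 c_le] := psi_le t t_ge0.
  exact: Brho_comp c_gt0 c_le (fun r => psi_cont t r t_ge0) fB.
- by [].
- move=> t t_ge0; have [c c_gt0 c_le] := psi_le t t_ge0.
  by exists c => f _; exact: rho_norm_comp.
- by move=> f _; apply/funext => x; rewrite /= psi0.
split.
- by move=> s t s_ge0 t_ge0 f _; apply/funext => x; rewrite /= -psiD.
- move=> f fB x; have Cx : C * rho x <= (C + 1) * rho x by rewrite ler_pM2r// lerDl.
  apply: (Brho_cvg_comp (r := (C + 1) * rho x)) fB _ _ (psi_cvg x) => //.
    by rewrite ler_pMl// lerDr ltW.
  near=> t; apply: le_trans Cx; apply: psi_le_C; apply/andP; split.
    by apply: ltW; near: t; exact: nbhs_right_gt.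
  by near: t; exact: nbhs_right_lt.
- exists (delta / 2), C; split=> [|t /andP[t_ge0 t_le] f _]; first by rewrite divr_gt0.
  apply: rho_norm_comp => // x; apply: psi_le_C; rewrite t_ge0 (le_lt_trans t_le)//.
  by rewrite ltr_pdivrMr// ltr_pMr// ltr1n.
- by move=> t _ f _ f_ge0 x; exact: f_ge0.
Unshelve. all: by end_near.
Qed.
End WeightedSpace.

Theorem mainTheorem15 (R : realType) (E : topologicalType) (rho : E -> R)
  (psi : R -> E -> E) :
  weighted_space rho ->
  let P := fun (t : R) (f : E -> R) => f \o psi t in
  (gen_Feller_semigroup rho P <->
    [/\ (forall x, psi 0 x = x),
        (forall t1 t2, 0 <= t1 -> 0 <= t2 -> psi t1 \o psi t2 = psi (t1 + t2)),
        (forall x, psi t x @[t --> 0^'+] --> x),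
        (forall t r, 0 <= t -> 0 < r -> {within sublevel rho r, continuous psi t}) &
        ((forall t, 0 <= t -> (Ct rho psi t < +oo)%E) /\
        (exists delta C : R, [/\ 0 < delta, 0 < C &
           forall t, 0 <= t < delta -> (Ct rho psi t < C%:E)%E]))]) /\
  (gen_Feller_semigroup rho P -> forall t x, 0 <= t ->
     ereal_sup [set (`|f (psi t x)|)%:E | f in [set f : E -> R | Cb f /\
                  (forall y, `|f y| <= rho y)]] = (rho (psi t x))%:E).
Proof.
move=> [crE hausE [rho_gt0 sublevel_compact]] P; split.
  split; first exact: composition_semigroup_flow.
  exact: flow_composition_semigroup.
by move=> _ t x _; exact: ereal_sup_Cb_le_rho.
Qed.
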